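(* Let $R$ be a finite semiring with $0$ and $1$, let $M\in\mathrm{Mat}_m(R)$, and suppose the preperiod $\mathrm{pr}(M)$ exists. Let $n\ge1$, let $b_0,\dots,b_{n-1}\in\mathbb{N}$ be such that the integer circulant matrix $B=\mathrm{Circ}(b_0,\dots,b_{n-1})$ satisfies $\det(B)\neq 0$, and let $v=(M^{b_0},\dots,M^{b_{n-1}})$. Let $A=\mathrm{Circ}(a_0,\dots,a_{n-1})\in\mathrm{Circ}_n(\mathbb{N})$ satisfy $$\sum_{i=0}^{n-1} a_i\, b_{i+k}\le \mathrm{pr}(M)-1\quad\text{for every }k=0,\dots,n-1$$ (indices modulo $n$). Then for $X\in\mathrm{Circ}_n(\mathbb{N})$, $Xv=Av$ holds if and only if $X=A$.
   Context: $\mathrm{Circ}(c_0,\dots,c_{n-1})$ denotes the $n\times n$ matrix with $(i,j)$ entry $c_{(i-j)\bmod n}$ ($0\le i,j\le n-1$), and $\mathrm{Circ}_n(\mathbb{N})$ is the set of such matrices with entries in $\mathbb{N}=\{0,1,2,\dots\}$. For $C=\mathrm{Circ}(c_0,\dots,c_{n-1})\in\mathrm{Circ}_n(\mathbb{N})$ and a tuple $w=(w_0,\dots,w_{n-1})$ of pairwise commuting elements of a monoid, $Cw$ is the tuple with $(Cw)_i=\prod_{j=0}^{n-1} w_j^{\,c_{j-i}}$ (indices mod $n$, $w^0$ the identity); here the entries of $v$ are powers of $M$, hence commute. A semiring is a set with two associative operations $+,\cdot$, $\cdot$ distributing over $+$ on both sides; $R$ is additively commutative with $0$ and $1$. For $g$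 in a finite monoid, the preperiod $\mathrm{pr}(g)$ is the largest non-negative integer $m$ such that $g^k\neq g^m$ for all $k>m$ (exponents in $\mathbb{N}$); ''exists'' means such an $m$ exists. *)

From mathcomp Require Import all_boot all_order all_algebra.
Set Implicit Arguments. Unset Strict Implicit. Unset Printing Implicit Defensive.
Import GRing.Theory.

Definition circ (n : nat) (c : n.-tuple nat) : 'M[nat]_n :=
  \matrix_(i < n, j < n) nth 0%N c ((i + n - j) %% n).

(* Action of a nat-matrix C on a tuple w of (commuting) elements of a
   semiring:  (C w)_i = prod_j w_j ^ (C j i)  (= w_j^{c_{j-i}} for C circulant). *)
Definition circ_act (S : pzSemiRingType) (n : nat) (C : 'M[nat]_n)
  (w : 'I_n -> S) : {ffun 'I_n -> S} :=
  [ffun i => (\prod_(j < n) (w j) ^+ (C j i))%R].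

Definition is_preperiod (S : pzSemiRingType) (g : S) (p : nat) : Prop :=
  (forall k, (p < k)%N -> (g ^+ k)%R <> (g ^+ p)%R) /\
  (forall q, (forall k, (q < k)%N -> (g ^+ k)%R <> (g ^+ q)%R) -> (q <= p)%N).

From mathcomp Require Import all_boot all_order all_algebra zify.
Set Implicit Arguments. Unset Strict Implicit. Unset Printing Implicit Defensive.
Import GRing.Theory.
Local Open Scope ring_scope.

(* Every entry of [C v] is a power of M: (C v)_k = M ^+ e_k with e = b^T C.
   The bound on A keeps e(A) below pr(M), where k |-> M ^+ k is injective, so
   X v = A v forces e(X) = e(A).  Then B^T X and B^T A are circulant matrices
   with the same first row, hence equal, and det B <> 0 cancels B^T. *)

(* The ring 'I_n.+1 is Z/nZ, so circulant indices are ring differences. *)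
Lemma circE n (c : n.+1.-tuple nat) (i j : 'I_n.+1) : circ c i j = nth 0%N c (i - j)%R.
Proof.
rewrite mxE; congr nth.
by rewrite /GRing.opp /GRing.add /= modnDmr addnBA // ltnW.
Qed.

Definition is_circulant (T : Type) n (A : 'M[T]_n.+1) :=
  forall i j r : 'I_n.+1, A (i + r) (j + r) = A i j.

Lemma circ_circulant n (c : n.+1.-tuple nat) : is_circulant (circ c).
Proof. by move=> i j r; rewrite !circE opprD addrACA subrr addr0. Qed.

Lemma map_circulant (T U : Type) (f : T -> U) n (A : 'M[T]_n.+1) :
  is_circulant A -> is_circulant (map_mx f A).
Proof. by move=> cA i j r; rewrite !mxE cA. Qed.

Lemma trmx_circulant (T : Type) n (A : 'M[T]_n.+1) :
  is_circulant A -> is_circulant A^T.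
Proof. by move=> cA i j r; rewrite !mxE cA. Qed.

Lemma mulmx_circulant (R : pzSemiRingType) n (A B : 'M[R]_n.+1) :
  is_circulant A -> is_circulant B -> is_circulant (A *m B).
Proof.
move=> cA cB i j r; rewrite !mxE (reindex_inj (addIr r)) /=.
by apply: eq_bigr => l _; rewrite cA cB.
Qed.

Lemma circulant_row0_eq (T : Type) n (A B : 'M[T]_n.+1) :
  is_circulant A -> is_circulant B -> (forall j, A 0 j = B 0 j) -> A = B.
Proof.
move=> cA cB eq0; apply/matrixP => i j.
by rewrite -[i]add0r -[j](subrK i) cA cB.
Qed.

Lemma trmx_circ_mul_row0 n (b c : n.+1.-tuple nat) (k : 'I_n.+1) :
  ((map_mx Posz (circ b))^T *m map_mx Posz (circ c)) 0 k
  = Posz (\sum_(j < n.+1) nth 0 b j * circ c j k).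
Proof.
rewrite mxE (big_morph Posz PoszD (erefl (Posz 0))).
by apply: eq_bigr => j _; rewrite !mxE subn0 modnDr modn_small ?PoszM.
Qed.

Lemma sum_mul_circ_col n (b c : n.+1.-tuple nat) (k : 'I_n.+1) :
  (\sum_(j < n.+1) nth 0 b j * circ c j k =
   \sum_(i < n.+1) nth 0 c i * nth 0 b ((i + k) %% n.+1))%N.
Proof.
rewrite (reindex_inj (addIr k)) /=.
by apply: eq_bigr => i _; rewrite circE addrK mulnC.
Qed.

Lemma det_neq0_mulmxI (R : idomainType) n p (A : 'M[R]_n) (X Y : 'M[R]_(n, p)) :
  \det A != 0 -> A *m X = A *m Y -> X = Y.
Proof.
move=> detA AXY; apply/matrixP => i j.
have /matrixP/(_ i j) := congr1 (mulmx (\adj A)) AXY.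
rewrite !mulmxA mul_adj_mx !mul_scalar_mx !mxE.
by move/mulfI; apply.
Qed.

Lemma circ_act_expr (S : pzSemiRingType) n (C : 'M[nat]_n) (g : S) (e : 'I_n -> nat) i :
  circ_act C (fun j => g ^+ e j) i = g ^+ (\sum_j e j * C j i)%N.
Proof.
rewrite ffunE (big_morph (fun k => g ^+ k) (exprD g) (expr0 g)).
by apply: eq_bigr => j _; rewrite exprM.
Qed.

Lemma preperiod_expr_inj (S : pzSemiRingType) (g : S) p e f :
  is_preperiod g p -> (e <= p)%N -> g ^+ f = g ^+ e -> f = e.
Proof.
case=> gp _ le_ep.
have neq d k : (d <= p)%N -> (d < k)%N -> g ^+ k != g ^+ d.
  move=> le_dp lt_dk; apply/eqP => gkd.
  have /gp : (p < k + (p - d))%N by lia.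
  by rewrite exprD gkd -exprD subnKC.
move=> gfe; case: (ltngtP f e) => // [lt_fe | lt_ef].
- by move: (neq f e (leq_trans (ltnW lt_fe) le_ep) lt_fe); rewrite gfe eqxx.
- by move: (neq e f le_ep lt_ef); rewrite gfe eqxx.
Qed.

Theorem mainTheorem6 (R : finPzSemiRingType) (m : nat) (M : 'M[R]_m)
  (pr : nat) (Hpr : is_preperiod M pr)
  (n : nat) (Hn : (1 <= n)%N) (b : n.-tuple nat)
  (HdetB : (\det (map_mx (fun x : nat => x%:Z) (circ b)) != 0)%R)
  (a : n.-tuple nat)
  (Ha : forall k : 'I_n,
      ((\sum_(i < n) nth 0%N a i * nth 0%N b ((i + k) %% n)) + 1 <= pr)%N) :
  let v : 'I_n -> 'M[R]_m := fun j => (M ^+ nth 0%N b j)%R in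
  forall x : n.-tuple nat,
    circ_act (circ x) v = circ_act (circ a) v <-> circ x = circ a.
Proof.
case: n Hn b HdetB a Ha => // n _ b HdetB a Ha v x.
split=> [/ffunP act_eq|-> //].
have exponent_eq k :
    (\sum_(j < n.+1) nth 0 b j * circ x j k = \sum_(j < n.+1) nth 0 b j * circ a j k)%N.
  have := act_eq k; rewrite /v !circ_act_expr; apply: preperiod_expr_inj Hpr _.
  by rewrite sum_mul_circ_col; apply: leq_trans (Ha k); rewrite leq_addr.
have /matrixP int_eq : map_mx Posz (circ x) = map_mx Posz (circ a).
  pose B := map_mx Posz (circ b).
  have BtC_circulant c : is_circulant (B^T *m map_mx Posz (circ c)).
    by apply: mulmx_circulant; [apply: trmx_circulant|]; apply/map_circulant/circ_circulant.
  apply: (@det_neq0_mulmxI _ _ _ B^T); first by rewrite det_tr.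
  by apply: circulant_row0_eq => // k; rewrite !trmx_circ_mul_row0 exponent_eq.
by apply/matrixP => i j; have := int_eq i j; rewrite !mxE => -[].
Qed.
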